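(* Let $d\geq1$, $T\geq2$, and let $x^0,x^1\in(\mathbb{R}^d)^T$ satisfy $x^0_{t,j}\neq x^1_{t,j}$ for all $t,j$. For $1\le t\le T$ let $\mathcal{E}_t:=(\{0,1\}^d)^t$ and for $\vec\varepsilon_t=(\varepsilon_{s,j})_{s\le t,\,j\le d}\in\mathcal{E}_t$ let $x^{\vec\varepsilon_t}:=(x^{\varepsilon_{s,j}}_{s,j})_{s\le t,\,j\le d}$; let $D:=\{x^{\vec\varepsilon_T}:\vec\varepsilon_T\in\mathcal{E}_T\}$. Consider the real variables $u_{t,j}(\vec\varepsilon_t)$ for $1\le t\le T-1$, $1\le j\le d$, $\vec\varepsilon_t\in\mathcal{E}_t$, together with $w_1^0,w_1^1$ and $w_j^1$ for $2\le j\le d$ (a total of $d\sum_{t=1}^{T-1}2^{dt}+d+1$ variables), and the linear map $L_T$ sending them to the vector indexed by $\vec\varepsilon_T\in\mathcal{E}_T$ with entries $\sum_{t=1}^{T-1}\sum_{j=1}^d u_{t,j}(\vec\varepsilon_t)\,(x^{\varepsilon_{t+1,j}}_{t+1,j}-x^{\varepsilon_{t,j}}_{t,j})+w_1^{\varepsilon_{T,1}}+\sum_{j=2}^d \varepsilon_{T,j}\,w_j^1,$ where $\vec\varepsilon_t$ denotes the truncation of $\vec\varepsilon_T$ to its first $t$ blocks. Then the matrix of $L_T$ (with respect to any ordering of rows and columns) has full column rank, i.e. $L_T$ is injective.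
   Context: This linear map encodes the evaluation on the cuboid $D$ of $V=\sum_{t=1}^{T-1}\sum_{j=1}^d\hat h_{t,j}(x_1,\dots,x_t)(x_{t+1,j}-x_{t,j})+\sum_{j=1}^d\hat g_j(x_{T,j})$ under the normalization $\hat g_j(x^0_{T,j})=0$ for $j\ge2$, with $u_{t,j}(\vec\varepsilon_t)=\hat h_{t,j}(x^{\vec\varepsilon_t})$, $w_1^k=\hat g_1(x^k_{T,1})$, $w^1_j=\hat g_j(x^1_{T,j})$. *)

From HB Require Import structures.
From mathcomp Require Import all_boot all_order all_algebra.
From mathcomp Require Import reals.
Set Implicit Arguments. Unset Strict Implicit. Unset Printing Implicit Defensive.
Import Order.TTheory GRing.Theory Num.Theory.
Local Open Scope ring_scope.

(* 0-based indexing: times 'I_T = {0,..,T-1} (paper: 1..T), coordinates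
   'I_d (paper: 1..d).  A sign pattern eps_T in E_T = ({0,1}^d)^T is a
   {ffun 'I_T -> {ffun 'I_d -> bool}}. *)

Lemma succ_ord_proof (n : nat) (i : 'I_n.-1) : (i.+1 < n)%N.
Proof. have := ltn_ord i. by case: n i => //= n i; rewrite ltnS. Qed.

Definition succ_ord (n : nat) (i : 'I_n.-1) : 'I_n := Ordinal (succ_ord_proof i).

Definition pred_widen (n : nat) (i : 'I_n.-1) : 'I_n := widen_ord (leq_pred n) i.

Lemma pred_lt (n : nat) : (0 < n)%N -> (n.-1 < n)%N.
Proof. by case: n. Qed.

(* truncation of eps_T to its first t+1 blocks, for t : 'I_T.-1
   (paper index t+1 in 1..T-1) *)
Definition trunc (T d : nat) (t : 'I_T.-1) (e : {ffun 'I_T -> {ffun 'I_d -> bool}})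
  : {ffun 'I_t.+1 -> {ffun 'I_d -> bool}} :=
  [ffun s : 'I_t.+1 => e (widen_ord (ltnW (succ_ord_proof t)) s)].

Definition xsel (R : Type) (T d : nat) (x0 x1 : 'I_T -> 'I_d -> R) (b : bool)
  (t : 'I_T) (j : 'I_d) : R := if b then x1 t j else x0 t j.

(* The linear map L_T.  u t j is u_{t+1,j+1} (paper), defined on E_{t+1};
   w10 = w_1^0, w11 = w_1^1, w j = w_{j+2}^1 for j : 'I_d.-1;
   tl = last time T-1 (paper T); j0 = first coordinate (paper 1). *)
Definition LT (R : realType) (T d : nat) (x0 x1 : 'I_T -> 'I_d -> R)
  (tl : 'I_T) (j0 : 'I_d)
  (u : forall t : 'I_T.-1, 'I_d -> {ffun 'I_t.+1 -> {ffun 'I_d -> bool}} -> R)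
  (w10 w11 : R) (w : 'I_d.-1 -> R)
  (e : {ffun 'I_T -> {ffun 'I_d -> bool}}) : R :=
  \sum_(t : 'I_T.-1) \sum_(j : 'I_d)
     u t j (trunc t e) *
       (xsel x0 x1 (e (succ_ord t) j) (succ_ord t) j
        - xsel x0 x1 (e (pred_widen t) j) (pred_widen t) j)
  + (if e tl j0 then w11 else w10)
  + \sum_(j : 'I_d.-1) (nat_of_bool (e tl (succ_ord j)))%:R * w j.

From HB Require Import structures.
From mathcomp Require Import all_boot all_order all_algebra.
From mathcomp Require Import reals.
From mathcomp Require Import ring.

Set Implicit Arguments.
Unset Strict Implicit.
Unset Printing Implicit Defensive.
Import Order.TTheory GRing.Theory Num.Theory.
Local Open Scope ring_scope.

(* Backward induction on the number of periods. Write L_T(u, w) = 0 as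
     sum_(t < n) sum_j A t j e * (X (t+1) j (e (t+1) j) - X t j (e t j))
       + sum_j h j (e n j) + C = 0
   for every sign path e, with A t j depending only on e up to time t.
   Flipping the single sign e n j shows that A (n-1) j is a constant k j with
   k j * (X n j 1 - X n j 0) = h j 0 - h j 1. Then k j * X n j b + h j b does not
   depend on b, so the last period can be absorbed into the terminal term, leaving
   an identity of the same shape over n-1 periods with terminal terms
   - k j * X (n-1) j b. By induction these do not depend on b, which forces
   k j = 0 because X (n-1) j 0 <> X (n-1) j 1. *)

Lemma separable_sum_eq0 (V : zmodType) (I : finType) (F : I -> bool -> V) (c : V) :
  (forall f : I -> bool, \sum_i F i (f i) + c = 0) -> forall j, F j true = F j false.
Proof.
move=> F0 j; apply/eqP; rewrite -subr_eq0.
have <- : \sum_i F i (i == j) - \sum_i F i false = F j true - F j false.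
  by rewrite -sumrB (bigD1 j) //= eqxx big1 ?addr0 // => i /negbTE ->; rewrite subrr.
by rewrite subr_eq0; apply/eqP/(addIr c); rewrite !F0.
Qed.

Section TradingGains.

Variables (R : fieldType) (d : nat) (X : nat -> 'I_d -> bool -> R).
Hypothesis X_inj : forall t j, X t j true != X t j false.

Implicit Types (e : nat -> 'I_d -> bool) (A : nat -> 'I_d -> (nat -> 'I_d -> bool) -> R)
  (h : 'I_d -> bool -> R).

Definition adapted A :=
  forall t j e e', (forall s i, (s <= t)%N -> e s i = e' s i) -> A t j e = A t j e'.

Definition increment A e t :=
  \sum_(j < d) A t j e * (X t.+1 j (e t.+1 j) - X t j (e t j)).

Definition gains n A h C e := \sum_(t < n) increment A e t + \sum_(j < d) h j (e n j) + C.

Definition set_time e m (f : 'I_d -> bool) : nat -> 'I_d -> bool :=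
  fun s => if s == m then f else e s.

Lemma increment_set_time_future A e t m f :
  adapted A -> (t < m)%N -> increment A (set_time e m.+1 f) t = increment A e t.
Proof.
move=> adA ltm; rewrite /increment /set_time !ltn_eqF ?ltnS ?(ltnW ltm) //.
apply: eq_bigr => j _; congr (_ * _); apply: adA => s i les.
by rewrite ltn_eqF // ltnS (leq_trans les) // ltnW.
Qed.

Lemma gains_set_last A h C e n f : adapted A ->
  gains n.+1 A h C (set_time e n.+1 f) =
  \sum_(t < n) increment A e t + C +
  \sum_(j < d) (A n j e * (X n.+1 j (f j) - X n j (e n j)) + h j (f j)).
Proof.
move=> adA; rewrite /gains big_ord_recr /=.
rewrite (eq_bigr (fun t : 'I_n => increment A e t)); last first.
  by move=> t _; apply: increment_set_time_future.
rewrite big_split /= /increment /set_time eqxx ltn_eqF //.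
have Aset j : A n j (fun s => if s == n.+1 then f else e s) = A n j e.
  by apply: adA => s i les; rewrite ltn_eqF.
under [X in _ + X + _ + _]eq_bigr do rewrite Aset.
ring.
Qed.

Lemma last_increment_coef A h C n : adapted A ->
  (forall e, gains n.+1 A h C e = 0) ->
  forall j e, A n j e * (X n.+1 j true - X n.+1 j false) = h j false - h j true.
Proof.
move=> adA G0 j e.
pose F j b := A n j e * (X n.+1 j b - X n j (e n j)) + h j b.
have /(_ j) Fj : forall j, F j true = F j false.
  apply: (@separable_sum_eq0 _ _ F (\sum_(t < n) increment A e t + C)) => f.
  by rewrite addrC -gains_set_last.
transitivity (F j true - F j false + (h j false - h j true)); first by rewrite /F; ring.
by rewrite Fj subrr add0r.
Qed.

Lemma gains_absorb_last A h C n (k c : 'I_d -> R) :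
  (forall j e, A n j e = k j) -> (forall j b, k j * X n.+1 j b + h j b = c j) ->
  forall e,
  gains n.+1 A h C e = gains n A (fun j b => - (k j * X n j b)) (\sum_j c j + C) e.
Proof.
move=> Ak hk e; rewrite /gains big_ord_recr /= -!addrA; congr (_ + _).
rewrite !addrA; congr (_ + _); rewrite /increment -!big_split /=.
by apply: eq_bigr => j _; rewrite Ak -(hk j (e n.+1 j)); ring.
Qed.

Lemma gains_eq0 n A h C : adapted A -> (forall e, gains n A h C e = 0) ->
  [/\ forall t j e, (t < n)%N -> A t j e = 0,
      forall j, h j true = h j false & \sum_j h j false + C = 0].
Proof.
move=> adA; elim: n h C => [|n IH] h C G0.
  have G0' f : \sum_j h j (f j) + C = 0.
    by have := G0 (fun=> f); rewrite /gains big_ord0 add0r.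
  by split=> [//||]; [apply: separable_sum_eq0 G0' | apply: G0'].
pose k j := (h j false - h j true) / (X n.+1 j true - X n.+1 j false).
have Ak j e : A n j e = k j.
  by rewrite /k -(last_increment_coef adA G0 j e) mulfK ?subr_eq0.
have hk j b : k j * X n.+1 j b + h j b = k j * X n.+1 j false + h j false.
  case: b => //; apply/eqP; rewrite -subr_eq0; apply/eqP.
  transitivity (k j * (X n.+1 j true - X n.+1 j false) - (h j false - h j true)).
    by ring.
  by rewrite /k divfK ?subr_eq0 // subrr.
have [IA Ih Is] := IH _ _ (fun e => etrans (esym (gains_absorb_last C Ak hk e)) (G0 e)).
have k0 j : k j = 0.
  have /eqP := Ih j; rewrite eqr_opp -subr_eq0 -mulrBr mulf_eq0 subr_eq0.
  by rewrite (negbTE (X_inj n j)) orbF => /eqP.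
split.
- move=> t j e; rewrite ltnS leq_eqVlt => /predU1P [-> | /IA //].
  by rewrite Ak k0.
- by move=> j; have := hk j true; rewrite k0 !mul0r !add0r.
- move: Is; rewrite big1 => [|j _]; last by rewrite k0 mul0r oppr0.
  by rewrite add0r; under eq_bigr do rewrite k0 mul0r add0r.
Qed.

End TradingGains.

Lemma LT_sub (R : realType) T d x0 x1 tl j0 u u' w10 w11 w10' w11' w w' e :
  @LT R T d x0 x1 tl j0 u w10 w11 w e - LT x0 x1 tl j0 u' w10' w11' w' e =
  LT x0 x1 tl j0 (fun t j et => u t j et - u' t j et) (w10 - w10') (w11 - w11')
     (fun j => w j - w' j) e.
Proof.
rewrite /LT.
under [in RHS]eq_bigr do (under eq_bigr do rewrite mulrBl; rewrite sumrB).
under [X in _ = _ + X]eq_bigr do rewrite mulrBr.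
rewrite !sumrB.
by case: ifP => _; ring.
Qed.

Definition path_ffun T d (e : nat -> 'I_d -> bool) : {ffun 'I_T -> {ffun 'I_d -> bool}} :=
  [ffun s : 'I_T => [ffun i => e s i]].

Lemma inord_le n m : (@inord n m <= m)%N.
Proof. by rewrite /inord /insubd; case: insubP => [i _ ->|_]. Qed.

Section LTKernel.

Variables (R : realType) (n d : nat) (x0 x1 : 'I_n.+2 -> 'I_d.+1 -> R).
Hypothesis hx : forall t j, x0 t j != x1 t j.
Variables (u : forall t : 'I_n.+1, 'I_d.+1 -> {ffun 'I_t.+1 -> {ffun 'I_d.+1 -> bool}} -> R)
  (w10 w11 : R) (w : 'I_d -> R).

(* [inord] clamps out-of-range times: [LT_coef] and [LT_price] are junk beyond
   the horizon. *)
Definition LT_coef t j (e : nat -> 'I_d.+1 -> bool) : R :=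
  let t' : 'I_n.+1 := inord t in @u t' j (@trunc n.+2 _ t' (path_ffun n.+2 e)).

Definition LT_price t j (b : bool) : R := xsel x0 x1 b (inord t) j.

Definition LT_payoff (j : 'I_d.+1) (b : bool) : R :=
  if unlift ord0 j is Some i then b%:R * w i else if b then w11 else w10.

Lemma LT_price_inj t j : LT_price t j true != LT_price t j false.
Proof. by rewrite /LT_price /xsel eq_sym. Qed.

Lemma LT_coef_adapted : adapted LT_coef.
Proof.
move=> t j e e' ee'; rewrite /LT_coef; congr (@u _ _ _).
apply/ffunP => s; apply/ffunP => i; rewrite !ffunE /=.
by apply: ee'; rewrite (leq_trans _ (inord_le n t)) // -ltnS.
Qed.

Lemma LT_path_ffun e :
  LT x0 x1 ord_max ord0 u w10 w11 w (path_ffun n.+2 e) =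
  gains LT_price n.+1 LT_coef LT_payoff 0 e.
Proof.
rewrite /LT /gains addr0 [X in _ = _ + X]big_ord_recl addrA; congr (_ + _ + _).
- apply: eq_bigr => t _; apply: eq_bigr => j _; have t_lt := ltn_ord t.
  have -> : succ_ord t = inord t.+1 by apply: val_inj; rewrite /= inordK.
  have -> : pred_widen t = inord t by apply: val_inj; rewrite /= inordK // ltnW.
  by rewrite /LT_coef /LT_price inord_val !ffunE /= !inordK // ltnW.
- by rewrite /LT_payoff unlift_none !ffunE.
- apply: eq_bigr => j _; rewrite /LT_payoff liftK !ffunE.
  by have -> : succ_ord j = lift ord0 j by exact: val_inj.
Qed.

Lemma LT_eq0_ord :
  (forall e, LT x0 x1 ord_max ord0 u w10 w11 w e = 0) ->
  (forall t j et, @u t j et = 0) /\ w10 = 0 /\ w11 = 0 /\ forall j, w j = 0.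
Proof.
move=> L0; have [coef0 payoff_const payoff0] :=
  gains_eq0 LT_price_inj LT_coef_adapted (fun e => etrans (esym (LT_path_ffun e)) (L0 _)).
split.
  move=> t j et; pose e s i := if (s <= t)%N then et (inord s) i else false.
  have := coef0 t j e (ltn_ord t); rewrite /LT_coef inord_val.
  suff -> : @trunc n.+2 _ t (path_ffun n.+2 e) = et by [].
  apply/ffunP => s; apply/ffunP => i; rewrite !ffunE /= /e -ltnS ltn_ord.
  by rewrite inord_val.
move: payoff0; rewrite addr0 big_ord_recl big1 => [|j _]; last first.
  by rewrite /LT_payoff liftK mul0r.
rewrite addr0 /LT_payoff unlift_none => w10_0; split=> //.
split; first by have := payoff_const ord0; rewrite /LT_payoff unlift_none w10_0.
by move=> j; have := payoff_const (lift ord0 j); rewrite /LT_payoff liftK mul1r mul0r.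
Qed.

End LTKernel.

Lemma LT_eq0 (R : realType) (d T : nat) (hd : (1 <= d)%N) (hT : (2 <= T)%N)
  (x0 x1 : 'I_T -> 'I_d -> R) (hx : forall t j, x0 t j != x1 t j)
  (u : forall t : 'I_T.-1, 'I_d -> {ffun 'I_t.+1 -> {ffun 'I_d -> bool}} -> R)
  (w10 w11 : R) (w : 'I_d.-1 -> R) :
  (forall e, LT x0 x1 (Ordinal (pred_lt (ltnW hT))) (Ordinal hd) u w10 w11 w e = 0) ->
  (forall t j et, @u t j et = 0) /\ w10 = 0 /\ w11 = 0 /\ forall j, w j = 0.
Proof.
case: T hT x0 x1 hx u => [|[|n]] // hT; case: d hd w => [|d] // hd w x0 x1 hx u.
have -> : Ordinal (pred_lt (ltnW hT)) = ord_max by exact: val_inj.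
have -> : Ordinal hd = ord0 by exact: val_inj.
exact: LT_eq0_ord.
Qed.

Theorem lemma4p1 (R : realType) (d T : nat) (hd : (1 <= d)%N) (hT : (2 <= T)%N)
  (x0 x1 : 'I_T -> 'I_d -> R)
  (hx : forall (t : 'I_T) (j : 'I_d), x0 t j != x1 t j)
  (u u' : forall t : 'I_T.-1, 'I_d -> {ffun 'I_t.+1 -> {ffun 'I_d -> bool}} -> R)
  (w10 w11 w10' w11' : R) (w w' : 'I_d.-1 -> R) :
  (forall e : {ffun 'I_T -> {ffun 'I_d -> bool}},
     LT x0 x1 (Ordinal (pred_lt (ltnW hT))) (Ordinal hd) u w10 w11 w e
     = LT x0 x1 (Ordinal (pred_lt (ltnW hT))) (Ordinal hd) u' w10' w11' w' e) ->
  (forall (t : 'I_T.-1) (j : 'I_d) (et : {ffun 'I_t.+1 -> {ffun 'I_d -> bool}}),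
     u t j et = u' t j et)
  /\ w10 = w10' /\ w11 = w11' /\ (forall j : 'I_d.-1, w j = w' j).
Proof.
move=> LT_eq.
have [] :=
  @LT_eq0 R d T hd hT x0 x1 hx (fun t j et => u t j et - u' t j et)
    (w10 - w10') (w11 - w11') (fun j => w j - w' j).
  by move=> e; rewrite -LT_sub LT_eq subrr.
move=> u_eq [/subr0_eq -> [/subr0_eq -> w_eq]].
split=> [t j et|]; first exact/subr0_eq/u_eq.
by do 2!split=> //; move=> j; apply/subr0_eq/w_eq.
Qed.
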